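(* Consider the random basic walk on the integer lattice $\mathbb{Z}^2$ (vertices $\mathbb{Z}^2$, edges between points at Euclidean distance $1$). For any starting vertex and any initial port, the random basic walk cycles with probability $1$.
   Context: Graphs are connected, countable and locally finite; each undirected edge $\{v,w\}$ is regarded as two arcs $v\to w$ and $w\to v$. A labeling assigns, at each vertex $v$ of degree $\deg(v)$, the port numbers $1,\dots,\deg(v)$ bijectively to the arcs leaving $v$ (labels on $v\to w$ and $w\to v$ need not agree). In a random labeling these bijections are chosen uniformly at random, independently for different vertices. Given a labeling, a starting vertex $v_0$ and an initial port $\ell$, the basic walk leaves $v_0$ along the arc labeled $\ell$; thereafter, whenever it enters a vertex $v$ along an arc whose label (at the tail of that arc) is $i$, it leaves $v$ along the arc out of $v$ labeled $(i \bmod \deg(v))+1$. The random basic walk is the basic walk for a random labeling. The walk cycles if some arc is traversed twice in the same direction (equivalently, from some point on the walk is periodic and visits only finitely many vertices); it is transient if it does not cycle, i.e. it visits infinitely many vertices, each only finitely often. *)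

From HB Require Import structures.
From mathcomp Require Import all_boot all_order all_algebra all_fingroup.
From mathcomp Require Import all_classical all_reals.
From mathcomp Require Import ereal measure.
Set Implicit Arguments. Unset Strict Implicit. Unset Printing Implicit Defensive.
Import GRing.Theory Num.Theory.

Local Open Scope ring_scope.
Local Open Scope classical_set_scope.

Definition vertex := (int * int)%type.

(* The four arcs leaving a vertex v (each vertex of Z^2 has degree 4) are
   indexed by directions d : 'I_4, the arc v -> v + dir d, with
   0 : (1,0), 1 : (0,1), 2 : (-1,0), 3 : (0,-1). *)
Definition dir (d : 'I_4) : int * int :=
  match val d with
  | 0%N => (1, 0)
  | 1%N => (0, 1)
  | 2%N => (-1, 0)
  | _ => (0, -1)
  end.

Definition vadd (v : vertex) (w : int * int) : vertex := (v.1 + w.1, v.2 + w.2).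

(* A labeling: at each vertex v a bijection from ports to arcs leaving v.
   Port number p+1 (p : 'I_4) is assigned to the arc in direction (lab v p). *)
Definition labeling := vertex -> {perm 'I_4}.

HB.instance Definition _ := gen_eqMixin labeling.
HB.instance Definition _ := gen_choiceMixin labeling.
HB.instance Definition _ := isPointed.Build labeling (fun _ => 1%g).


Definition arc := (vertex * 'I_4)%type.

(* The successor port: label i |-> (i mod 4) + 1, i.e. 0-based p |-> p+1 mod 4. *)
Definition next_port (p : 'I_4) : 'I_4 := ordS p.

(* One step of the basic walk: having traversed arc (v,d), enter w = v + dir d
   along an arc whose label at its tail v is (lab v)^-1 d; leave w along the arc
   labeled with the next port. *)
Definition walk_step (lab : labeling) (a : arc) : arc :=
  let: (v, d) := a in
  let w := vadd v (dir d) in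
  (w, lab w (next_port ((lab v)^-1%g d))).

(* The n-th arc traversed by the basic walk started at v0 with initial port l
   (port number val l + 1). *)
Definition basic_walk (lab : labeling) (v0 : vertex) (l : 'I_4) (n : nat) : arc :=
  iter n (walk_step lab) (v0, lab v0 l).

Definition cycles (lab : labeling) (v0 : vertex) (l : 'I_4) : Prop :=
  exists m n : nat, (m < n)%N /\ basic_walk lab v0 l m = basic_walk lab v0 l n.

Definition coord_events : set (set labeling) :=
  [set A | exists (v : vertex) (s : {perm 'I_4}), A = [set lab | lab v = s]].

Notation Lab := (g_sigma_algebraType coord_events).

(* Random labeling: the bijections at distinct vertices are independent and
   uniform on the 4! = 24 bijections, i.e. every finite cylinder event fixing
   the labelings at k distinct vertices has probability 24^-k. *)
Definition random_labeling_law (R : realType)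
    (P : probability Lab R) : Prop :=
  forall s : seq (vertex * {perm 'I_4}),
    uniq (map fst s) ->
    P [set lab : Lab | all (fun vs => lab vs.1 == vs.2) s]
      = (((24%:R : R)^-1) ^+ size s)%:E.

From HB Require Import structures.
From mathcomp Require Import all_boot all_order all_algebra all_fingroup.
From mathcomp Require Import all_classical all_reals.
From mathcomp Require Import ereal measure topology normedtype sequences.
From mathcomp Require Import zify lra.
Set Implicit Arguments. Unset Strict Implicit. Unset Printing Implicit Defensive.
Import Order.TTheory GRing.Theory Num.Theory.
Local Open Scope classical_set_scope.

(* A walk that never cycles visits infinitely many vertices (finitely many
   vertices carry only finitely many arcs), so it leaves every l1-ball around
   its start.  When it first steps onto the sphere of radius r, at a vertex c,
   the labels at c and at the three other corners of the unit square at c pointing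
   away from the origin have never been looked at; with probability
   q = 24^-4 they send the walk around this square forever.  The traps at the
   radii r, r + 3, r + 6, ... use disjoint vertex sets outside everything seen
   before, so the walk survives k of them with probability at most (1 - q)^k. *)

Definition cylinder (s : seq (vertex * {perm 'I_4})) : set Lab :=
  [set lab | all (fun vs => lab vs.1 == vs.2) s].

Lemma cylinder_cat s1 s2 : cylinder (s1 ++ s2) = cylinder s1 `&` cylinder s2.
Proof.
apply/seteqP; split=> lab; rewrite /cylinder /= all_cat; first by move/andP.
by move=> [-> ->].
Qed.

Lemma cylinder_nil : cylinder [::] = setT.
Proof. exact/seteqP. Qed.

Lemma measurable_cylinder s : measurable (cylinder s).
Proof.
elim: s => [|vs s IHs]; first by rewrite cylinder_nil.
rewrite -cat1s cylinder_cat; apply: measurableI => //.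
apply: sub_gen_smallest; exists vs.1, vs.2.
by apply/seteqP; split => lab; rewrite /cylinder /= andbT => /eqP.
Qed.

Lemma cylinder_zip (S : seq vertex) (t : seq {perm 'I_4}) lab :
  size t = size S -> cylinder (zip S t) lab <-> map lab S = t.
Proof.
elim: S t => [|v S IHS] [|p t] //= [/IHS {}IHS].
rewrite /cylinder /= -/(cylinder _ lab).
split=> [/andP[/eqP-> /IHS->] // | [-> /IHS]]; by rewrite eqxx.
Qed.

Lemma cylinder_eq_on (S : seq vertex) s lab lab' :
  {in S, lab =1 lab'} -> {subset map fst s <= S} ->
  cylinder s lab = cylinder s lab'.
Proof.
move=> labE sS; rewrite /cylinder /=.
by rewrite (@eq_in_all _ _ (fun vs => lab' vs.1 == vs.2)) // => vs /(map_f fst)/sS/labE->.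
Qed.

Definition depends_on (S : seq vertex) (A : set Lab) :=
  forall lab lab', {in S, lab =1 lab'} -> A lab -> A lab'.

Definition extend (S : seq vertex) (t : seq {perm 'I_4}) : labeling :=
  fun v => nth 1%g t (index v S).

Lemma extend_map S lab : {in S, extend S (map lab S) =1 lab}.
Proof. by move=> v vS; rewrite /extend (nth_map v) ?index_mem ?nth_index. Qed.

Notation pattern S := ((size S).-tuple {perm 'I_4}).

Lemma trivIset_cylinder_zip S (D : set (pattern S)) :
  trivIset D (fun t => cylinder (zip S t)).
Proof.
move=> t t' _ _ [lab [/cylinder_zip tE /cylinder_zip t'E]].
by apply: val_inj; rewrite /= -tE ?size_tuple // t'E ?size_tuple.
Qed.

Section Patterns.
Variables (S : seq vertex) (A : set Lab).
Hypothesis dA : depends_on S A.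

Let patterns := [set t : pattern S | A (extend S t)].

Lemma setI_cylinder_bigcup (g : labeling -> seq (vertex * {perm 'I_4})) :
  (forall lab lab', {in S, lab =1 lab'} -> A lab -> g lab = g lab') ->
  A `&` [set lab | cylinder (g lab) lab] =
  \bigcup_(t in patterns) (cylinder (zip S t) `&` cylinder (g (extend S t))).
Proof.
move=> gE; apply/seteqP; split => lab.
  move=> [Alab glab]; exists (map_tuple lab (in_tuple S)).
    by apply: (dA (lab := lab)) => // v /extend_map ->.
  have labE : {in S, lab =1 extend S (map lab S)} by move=> v /extend_map ->.
  by split; [apply/cylinder_zip; rewrite ?size_tuple | rewrite -(gE _ _ labE)].
move=> [t At] [/cylinder_zip labS glab].
have labE : {in S, extend S t =1 lab}.
  by rewrite -labS ?size_tuple //; apply: extend_map.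
by split; [apply: dA At | rewrite /= -(gE _ _ labE)].
Qed.

Lemma depends_on_bigcup : A = \bigcup_(t in patterns) cylinder (zip S t).
Proof.
have := setI_cylinder_bigcup (g := fun=> [::]) (fun _ _ _ _ => erefl).
rewrite (_ : [set lab | cylinder [::] lab] = setT) ?setIT ?cylinder_nil //.
by under eq_bigcupr do rewrite setIT.
Qed.

Lemma measurable_depends_on : measurable A.
Proof.
rewrite depends_on_bigcup; apply: fin_bigcup_measurable; first exact: finite_finset.
by move=> t _; apply: measurable_cylinder.
Qed.

Lemma measurable_setI_cylinder (g : labeling -> seq (vertex * {perm 'I_4})) :
  (forall lab lab', {in S, lab =1 lab'} -> A lab -> g lab = g lab') ->
  measurable (A `&` [set lab | cylinder (g lab) lab]).
Proof.
move=> gE; rewrite setI_cylinder_bigcup //.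
apply: fin_bigcup_measurable; first exact: finite_finset.
by move=> t _; apply: measurableI; apply: measurable_cylinder.
Qed.

Lemma measurable_setD_cylinder (g : labeling -> seq (vertex * {perm 'I_4})) :
  (forall lab lab', {in S, lab =1 lab'} -> A lab -> g lab = g lab') ->
  measurable (A `\` [set lab | cylinder (g lab) lab]).
Proof.
move=> gE; rewrite -[A `\` _]set0U -(setDv A) -setDIr.
exact: measurableD measurable_depends_on (measurable_setI_cylinder gE).
Qed.

End Patterns.

Section Independence.
Local Open Scope ring_scope.
Variables (R : realType) (P : probability Lab R).
Hypothesis HP : random_labeling_law P.
Variables (S : seq vertex) (A : set Lab).
Variables (g : labeling -> seq (vertex * {perm 'I_4})) (m : nat).
Hypothesis dA : depends_on S A.
Hypothesis gE : forall lab lab', {in S, lab =1 lab'} -> A lab -> g lab = g lab'.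
Hypothesis gA : forall lab, A lab -> size (g lab) = m /\ uniq (S ++ map fst (g lab)).

Let q : R := (24%:R^-1) ^+ m.

(* A is the disjoint union of the cylinders of its patterns on S, and g cuts
   each of them down by m further vertices outside S. *)
Lemma measure_setI_cylinder :
  P (A `&` [set lab | cylinder (g lab) lab]) = (P A * q%:E)%E.
Proof.
set c : R := (24%:R^-1) ^+ size S.
have cylP s : uniq (map fst s) -> P (cylinder s) = ((24%:R^-1) ^+ size s)%:E.
  exact: HP.
have patP (t : pattern S) : A (extend S t) ->
    uniq (map fst (zip S t ++ g (extend S t))) /\
    size (zip S t ++ g (extend S t)) = (size S + m)%N.
  move=> /gA[gm uSg]; rewrite map_cat [map _ (zip _ _)]unzip1_zip ?size_tuple //.
  by rewrite size_cat size_zip size_tuple minnn gm.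
rewrite [in RHS](depends_on_bigcup dA) (setI_cylinder_bigcup dA gE).
rewrite !measure_fin_bigcup //; first last; try exact: finite_finset.
- by move=> t _; apply: measurableI; apply: measurable_cylinder.
- exact: trivIset_setIr (@trivIset_cylinder_zip S _).
- by move=> t _; apply: measurable_cylinder.
- exact: (@trivIset_cylinder_zip S).
rewrite [in RHS](eq_fsbigr (fun=> c%:E)); last first.
  move=> t /[!inE] /patP[+ _]; rewrite map_cat cat_uniq => /andP[uS _].
  by apply: eq_trans (cylP _ uS) _; rewrite size_zip size_tuple minnn.
rewrite (eq_fsbigr (fun=> (c * q)%:E)); last first.
  move=> t /[!inE] /patP[uSg sizeg]; rewrite -cylinder_cat.
  by apply: eq_trans (cylP _ uSg) _; rewrite sizeg exprD.
rewrite !fsumEFin; try exact: finite_finset.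
by rewrite -EFinM mulr_fsuml.
Qed.

Lemma measure_setD_cylinder :
  P (A `\` [set lab | cylinder (g lab) lab]) = (P A * (1 - q)%:E)%E.
Proof.
set C := [set lab | cylinder (g lab) lab].
have mA := measurable_depends_on dA.
have PD : P (A `\` (A `&` C)) = (P A - P (A `&` (A `&` C)))%E.
  apply: (measureD mA (measurable_setI_cylinder dA gE)).
  exact: le_lt_trans (probability_le1 P mA) (ltry 1).
rewrite -[A `\` _]set0U -(setDv A) -setDIr PD setIA setIid measure_setI_cylinder.
by rewrite -(fineK (fin_num_measure P A mA)) -!EFinM -EFinB mulrBr mulr1.
Qed.

End Independence.

Definition l1norm (v : vertex) : nat := absz v.1 + absz v.2.

Lemma l1norm_vadd_dir v d : l1norm (vadd v (dir d)) <= (l1norm v).+1.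
Proof. by case: d => -[|[|[|[|]]]] ? //; rewrite /l1norm /vadd /=; lia. Qed.

Definition int_range (r : nat) : seq int := [seq (i%:Z - r%:Z)%R | i <- iota 0 r.*2.+1].

Lemma mem_int_range r (x : int) : absz x <= r -> x \in int_range r.
Proof.
by move=> xr; apply/mapP; exists (absz (x + r%:Z)%R); rewrite ?mem_iota; lia.
Qed.

Definition l1ball (r : nat) : seq vertex :=
  [seq v <- [seq (x, y) | x <- int_range r, y <- int_range r] | (l1norm v < r)].

Lemma uniq_l1ball r : uniq (l1ball r).
Proof.
have uniq_range : uniq (int_range r) by rewrite map_inj_uniq ?iota_uniq // => i j /=; lia.
by rewrite filter_uniq // allpairs_uniq // => -[? ?] [? ?].
Qed.

Lemma mem_l1ball r v : (v \in l1ball r) = (l1norm v < r).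
Proof.
rewrite mem_filter; case: ltnP => //; case: v => x y vr.
apply: (allpairs_f (fun a b => (a, b))); apply: mem_int_range;
  by move: vr; rewrite /l1norm /=; lia.
Qed.

Lemma l1ball_sub r r' : r <= r' -> {subset l1ball r <= l1ball r'}.
Proof. by move=> rr' v; rewrite !mem_l1ball => /leq_trans; apply. Qed.

Definition away_x (c : vertex) : 'I_4 :=
  if (0 <= c.1)%R then @Ordinal 4 0 isT else @Ordinal 4 2 isT.
Definition away_y (c : vertex) : 'I_4 :=
  if (0 <= c.2)%R then @Ordinal 4 1 isT else @Ordinal 4 3 isT.
Definition dir_opp (d : 'I_4) : 'I_4 := ordS (ordS d).

Definition corner1 c := vadd c (dir (away_x c)).
Definition corner2 c := vadd (corner1 c) (dir (away_y c)).
Definition corner3 c := vadd (corner2 c) (dir (dir_opp (away_x c))).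

Lemma corner3_closes c : vadd (corner3 c) (dir (dir_opp (away_y c))) = c.
Proof.
case: c => x y; rewrite /corner3 /corner2 /corner1 /away_x /away_y /=.
by case: ifP => ?; case: ifP => ?; rewrite /vadd /=; congr pair; lia.
Qed.

Lemma l1norm_corners c : [/\ l1norm (corner1 c) = (l1norm c).+1,
  l1norm (corner2 c) = (l1norm c).+2 & l1norm (corner3 c) = (l1norm c).+1].
Proof.
case: c => x y; rewrite /corner3 /corner2 /corner1 /away_x /away_y /l1norm /=.
by case: ifP => ?; case: ifP => ?; rewrite /vadd /=; split; lia.
Qed.

Lemma corner1_neq_corner3 c : corner1 c != corner3 c.
Proof.
case: c => x y; rewrite /corner3 /corner2 /corner1 /away_x /away_y /=.
by case: ifP => ?; case: ifP => ?; rewrite /vadd /=; apply/eqP; case; lia.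
Qed.

Lemma ordS4K (a : 'I_4) : ordS (ordS (ordS (ordS a))) = a.
Proof. by case: a => -[|[|[|[|]]]] // ?; apply: val_inj. Qed.

(* Labels forcing a walk that leaves c through port a around the unit square
   c, corner1 c, corner2 c, corner3 c; the square points away from the origin
   so that its other corners lie farther from it than c. *)
Definition trap (c : vertex) (a : 'I_4) : seq (vertex * {perm 'I_4}) :=
  [:: (c, tperm a (away_x c));
      (corner1 c, tperm (ordS a) (away_y c));
      (corner2 c, tperm (ordS (ordS a)) (dir_opp (away_x c)));
      (corner3 c, tperm (ordS (ordS (ordS a))) (dir_opp (away_y c)))].

Lemma uniq_trap c a : uniq (map fst (trap c a)).
Proof.
have [n1 n2 n3] := l1norm_corners c.
have neq v w : l1norm v != l1norm w -> v != w by apply: contraNneq => ->.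
rewrite /= !inE !negb_or corner1_neq_corner3 !neq ?n1 ?n2 ?n3 //.
all: lia.
Qed.

Lemma l1norm_trap c a :
  {in map fst (trap c a), forall v, l1norm c <= l1norm v < l1norm c + 3}.
Proof.
have [n1 n2 n3] := l1norm_corners c.
by move=> v /[!inE] /or4P[] /eqP->; rewrite /= ?n1 ?n2 ?n3; lia.
Qed.

Definition arc_trap (lab : labeling) (a : vertex * 'I_4) :=
  trap (vadd a.1 (dir a.2)) (next_port ((lab a.1)^-1%g a.2)).

Lemma iter_walk_step_trap lab (a : vertex * 'I_4) : cylinder (arc_trap lab a) lab ->
  iter 4 (walk_step lab) (walk_step lab a) = walk_step lab a.
Proof.
case: a => v d trap_lab; rewrite /cylinder /arc_trap /= andbT in trap_lab.
set c := vadd v (dir d) in trap_lab; set p := next_port _ in trap_lab.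
case/and4P: trap_lab => /eqP lab_c /eqP lab_c1 /eqP lab_c2 /eqP lab_c3.
have tpermVR (x y : 'I_4) : (tperm x y)^-1%g y = x by rewrite tpermV tpermR.
have step0 : walk_step lab (v, d) = (c, away_x c) by rewrite /= lab_c tpermL.
have step1 : walk_step lab (c, away_x c) = (corner1 c, away_y c).
  by rewrite /= lab_c tpermVR -/(corner1 c) lab_c1 tpermL.
have step2 : walk_step lab (corner1 c, away_y c) = (corner2 c, dir_opp (away_x c)).
  by rewrite /= lab_c1 tpermVR -/(corner2 c) lab_c2 tpermL.
have step3 : walk_step lab (corner2 c, dir_opp (away_x c)) =
    (corner3 c, dir_opp (away_y c)).
  by rewrite /= lab_c2 tpermVR -/(corner3 c) lab_c3 tpermL.
have step4 : walk_step lab (corner3 c, dir_opp (away_y c)) = (c, away_x c).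
  by rewrite /= lab_c3 tpermVR corner3_closes lab_c /next_port ordS4K tpermL.
by rewrite step0 !iterS step1 step2 step3 step4.
Qed.

Section Walk.
Variables (v0 : vertex) (l : 'I_4).

Local Notation walk lab := (basic_walk lab v0 l).

Definition walk_vertex lab n := (walk lab n).1.
Definition walk_target lab n := vadd (walk_vertex lab n) (dir (walk lab n).2).

Lemma basic_walkS lab n : walk lab n.+1 = walk_step lab (walk lab n).
Proof. exact: iterS. Qed.

Lemma walk_vertexS lab n : walk_vertex lab n.+1 = walk_target lab n.
Proof. by rewrite /walk_target /walk_vertex basic_walkS; case: (walk lab n). Qed.

Lemma basic_walk_eq lab lab' n :
  (forall m, m <= n -> lab (walk_vertex lab m) = lab' (walk_vertex lab m)) ->
  forall m, m <= n -> walk lab m = walk lab' m.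
Proof.
move=> labE; elim=> [|m IHm] mn; first by rewrite /basic_walk /= (labE 0).
rewrite !basic_walkS -(IHm (ltnW mn)).
have := labE m.+1 mn; have := labE m (ltnW mn).
rewrite walk_vertexS /walk_target /walk_vertex; case: (walk lab m) => v d /= labv labw.
by rewrite labv labw.
Qed.

Lemma l1norm_walk_target lab n :
  l1norm (walk_target lab n) <= (l1norm (walk_vertex lab n)).+1.
Proof. exact: l1norm_vadd_dir. Qed.

Lemma l1norm_walk_vertex lab n : l1norm (walk_vertex lab n) <= l1norm v0 + n.
Proof.
elim: n => [|n IHn]; first by rewrite addn0.
by rewrite walk_vertexS addnS (leq_trans (l1norm_walk_target _ _)).
Qed.

Lemma basic_walk_eq_on_l1ball lab lab' n :
  {in l1ball (l1norm v0 + n).+1, lab =1 lab'} ->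
  forall m, m <= n -> walk lab m = walk lab' m.
Proof.
move=> labE; apply: basic_walk_eq => m mn; apply: labE; rewrite mem_l1ball ltnS.
by rewrite (leq_trans (l1norm_walk_vertex _ _)) ?leq_add2l.
Qed.

Lemma cycles_of_bounded (B : seq vertex) T lab : 4 * size B <= T ->
  (forall m, m <= T -> walk_vertex lab m \in B) -> cycles lab v0 l.
Proof.
move=> TB walkB; set s := map (walk lab) (iota 0 T.+1).
have [us | /(uniqPn (walk lab 0))[i [j [ij js]]]] := boolP (uniq s); last first.
  rewrite /s size_map size_iota in js.
  rewrite !(nth_map 0) ?size_iota ?(ltn_trans ij) // !nth_iota ?(ltn_trans ij) //.
  by exists i, j.
have sB : {subset s <= [seq (v, d) | v <- B, d <- enum 'I_4]}.
  move=> a /mapP[m]; rewrite mem_iota => /andP[_ mT] ->.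
  rewrite (surjective_pairing (walk lab m)).
  by apply: (allpairs_f (fun v d => (v, d))); [apply: walkB | rewrite mem_enum].
have := uniq_leq_size us sB.
by rewrite /s size_map size_iota size_allpairs size_enum_ord; lia.
Qed.

Definition first_exit r n lab :=
  (forall m, m <= n -> l1norm (walk_vertex lab m) < r) /\
  r <= l1norm (walk_target lab n).

Lemma l1norm_first_exit r n lab : first_exit r n lab -> l1norm (walk_target lab n) = r.
Proof. by case=> inside /(conj (inside n (leqnn n))); have := l1norm_walk_target lab n; lia. Qed.

Lemma first_exit_eq_on r n lab lab' : {in l1ball r, lab =1 lab'} ->
  first_exit r n lab ->
  (forall m, m <= n -> walk lab m = walk lab' m) /\ first_exit r n lab'.
Proof.
move=> labE [inside out].
have walkE : forall m, m <= n -> walk lab m = walk lab' m.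
  by apply: basic_walk_eq => m mn; apply: labE; rewrite mem_l1ball inside.
split=> //; split; last by rewrite /walk_target /walk_vertex -walkE.
by move=> m mn; rewrite /walk_vertex -walkE // inside.
Qed.

Lemma first_exit_exists r n lab : l1norm v0 < r ->
  r <= l1norm (walk_target lab n) -> exists2 m, m <= n & first_exit r m lab.
Proof.
move=> v0r rn; have exn : exists n, r <= l1norm (walk_target lab n) by exists n.
case: (ex_minnP exn) => m rm m_min; exists m; first exact: m_min.
split=> // -[|j] jm //; rewrite walk_vertexS ltnNge; apply/negP => /m_min; lia.
Qed.

Lemma first_exit_of_not_cycles r lab : ~ cycles lab v0 l ->
  l1norm v0 < r -> exists n, first_exit r n lab.
Proof.
move=> notcyc v0r.
have [[n rn] | far] := pselect (exists n, r <= l1norm (walk_target lab n)).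
  by have [m _ exit] := first_exit_exists v0r rn; exists m.
case: notcyc; apply: (@cycles_of_bounded (l1ball r) (4 * size (l1ball r))) => // -[|m] _.
  by rewrite mem_l1ball.
by rewrite walk_vertexS mem_l1ball ltnNge; apply/negP => rm; apply: far; exists m.
Qed.

Lemma cycles_of_trap lab n : cylinder (arc_trap lab (walk lab n)) lab -> cycles lab v0 l.
Proof.
move=> /iter_walk_step_trap trapE; exists n.+1, (4 + n.+1).
by split; [lia | rewrite /basic_walk iterD (iterS n) trapE].
Qed.

Lemma arc_trap_eq_on r n lab lab' : {in l1ball r, lab =1 lab'} ->
  first_exit r n lab -> arc_trap lab (walk lab n) = arc_trap lab' (walk lab' n).
Proof.
move=> labE exit; have [walkE _] := first_exit_eq_on labE exit.
rewrite -walkE // /arc_trap labE // mem_l1ball.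
by case: exit => inside _; apply: inside.
Qed.

Lemma trap_sub_l1ball r n lab : first_exit r n lab ->
  {subset map fst (arc_trap lab (walk lab n)) <= l1ball (r + 3)}.
Proof.
move=> /l1norm_first_exit targetE v /l1norm_trap.
by rewrite mem_l1ball -targetE => /andP[].
Qed.

Definition untrapped r lab :=
  forall n, first_exit r n lab -> ~ cylinder (arc_trap lab (walk lab n)) lab.

Lemma depends_on_untrapped r : depends_on (l1ball (r + 3)) (untrapped r).
Proof.
move=> lab lab' labE untr n exit'.
have labE_r : {in l1ball r, lab' =1 lab}.
  by move=> v /(l1ball_sub (leq_addr 3 r)) /labE.
have exit := (first_exit_eq_on labE_r exit').2.
rewrite (arc_trap_eq_on labE_r exit') -(cylinder_eq_on labE (trap_sub_l1ball exit)).
exact: untr.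
Qed.

(* The traps at consecutive shells occupy disjoint annuli of width 3. *)
Definition shell k := (l1norm v0).+1 + 3 * k.

Definition escapes k : set Lab :=
  [set lab | (exists n, first_exit (shell k) n lab) /\
             forall j, j < k -> untrapped (shell j) lab].

Lemma depends_on_escapes k : depends_on (l1ball (shell k)) (escapes k).
Proof.
move=> lab lab' labE [[n exit] untr]; split.
  by exists n; apply: (first_exit_eq_on labE exit).2.
move=> j jk; apply: depends_on_untrapped (untr j jk).
have shell_sub : {subset l1ball (shell j + 3) <= l1ball (shell k)}.
  by apply: l1ball_sub; rewrite /shell; lia.
by move=> v /shell_sub /labE.
Qed.

Lemma measurable_escapes k : measurable (escapes k).
Proof. exact: (measurable_depends_on (@depends_on_escapes k)). Qed.

Lemma not_cycles_escapes k lab : ~ cycles lab v0 l -> escapes k lab.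
Proof.
move=> notcyc; split; first by apply: first_exit_of_not_cycles notcyc _; rewrite /shell; lia.
by move=> j _ n _ /cycles_of_trap.
Qed.

(* Junk value 0 when the walk never reaches radius r. *)
Definition exit_time r lab := xget 0 [set n | first_exit r n lab].

Lemma first_exit_time r n lab : first_exit r n lab -> first_exit r (exit_time r lab) lab.
Proof. exact: (@xgetI _ 0 [set m | first_exit r m lab]). Qed.

Lemma exit_time_eq_on r lab lab' : {in l1ball r, lab =1 lab'} ->
  exit_time r lab = exit_time r lab'.
Proof.
move=> labE; congr xget; apply/seteqP; split=> n exit.
  exact: (first_exit_eq_on labE exit).2.
by apply: (first_exit_eq_on _ exit).2 => v /labE.
Qed.

Definition exit_trap r lab := arc_trap lab (walk lab (exit_time r lab)).

Lemma exit_trap_eq_on r lab lab' : {in l1ball r, lab =1 lab'} ->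
  (exists n, first_exit r n lab) -> exit_trap r lab = exit_trap r lab'.
Proof.
move=> labE [n exit]; rewrite /exit_trap -(exit_time_eq_on labE).
exact: arc_trap_eq_on labE (first_exit_time exit).
Qed.

Lemma exit_trap_fresh r lab : (exists n, first_exit r n lab) ->
  size (exit_trap r lab) = 4 /\ uniq (l1ball r ++ map fst (exit_trap r lab)).
Proof.
move=> [n /first_exit_time /l1norm_first_exit targetE]; split=> //.
rewrite cat_uniq uniq_l1ball uniq_trap andbT; apply/hasPn => v /l1norm_trap.
by rewrite mem_l1ball -leqNgt targetE => /andP[].
Qed.

Lemma escapes_succ k : escapes k.+1 `<=`
  escapes k `\` [set lab | cylinder (exit_trap (shell k) lab) lab].
Proof.
move=> lab [[n exit] untr].
have [m _ exit_k] : exists2 m, m <= n & first_exit (shell k) m lab.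
  apply: first_exit_exists; first by rewrite /shell; lia.
  by rewrite (l1norm_first_exit exit) /shell; lia.
split; first by split=> [|j jk]; [exists m | apply: untr; lia].
exact: untr (ltnSn k) _ (first_exit_time exit_k).
Qed.

Lemma measurable_cycles : measurable [set lab : Lab | cycles lab v0 l].
Proof.
have -> : [set lab : Lab | cycles lab v0 l] = \bigcup_n \bigcup_m
    [set lab : Lab | m < n /\ walk lab m = walk lab n].
  apply/seteqP; split=> lab; first by case=> m [n cyc]; exists n => //; exists m.
  by case=> n _ [m _ cyc]; exists m, n.
apply: bigcupT_measurable => n; apply: bigcupT_measurable => m.
apply: (@measurable_depends_on (l1ball (l1norm v0 + n).+1)) => lab lab' labE [mn cyc].
have walkE := basic_walk_eq_on_l1ball labE.
by split=> //; rewrite -walkE ?(ltnW mn) // -walkE.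
Qed.

End Walk.

Local Open Scope ring_scope.

Lemma le0_of_le_expr (R : realType) (x z : R) :
  `|z| < 1 -> (forall k, x <= z ^+ k) -> x <= 0.
Proof.
move=> z1 xz; apply: (ler_cvg_to (f := fun=> x) (g := GRing.exp z) (a := \oo)).
- exact: (@cvg_cst R^o).
- exact: cvg_expr.
- by apply: nearW => k; apply: xz.
Qed.

Section Escape.
Variables (R : realType) (P : probability Lab R).
Hypothesis HP : random_labeling_law P.
Variables (v0 : vertex) (l : 'I_4).

Let q : R := (24%:R^-1) ^+ 4.

Let q_gt0 : 0 < q.
Proof. by rewrite exprn_gt0 // invr_gt0. Qed.

Let q_le1 : q <= 1.
Proof. by rewrite exprn_ile1 // invf_le1 // ler1n. Qed.

Lemma measure_escapes_succ k :
  (P (escapes v0 l k.+1) <= P (escapes v0 l k) * (1 - q)%:E)%E.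
Proof.
have dE := @depends_on_escapes v0 l k.
have trapE lab lab' : {in l1ball (shell v0 k), lab =1 lab'} -> escapes v0 l k lab ->
    exit_trap v0 l (shell v0 k) lab = exit_trap v0 l (shell v0 k) lab'.
  by move=> labE [exits _]; apply: exit_trap_eq_on.
have trap_fresh lab : escapes v0 l k lab ->
    size (exit_trap v0 l (shell v0 k) lab) = 4 /\
    uniq (l1ball (shell v0 k) ++ map fst (exit_trap v0 l (shell v0 k) lab)).
  by move=> [exits _]; apply: exit_trap_fresh.
rewrite -(measure_setD_cylinder HP dE trapE trap_fresh).
apply: le_measure (@escapes_succ v0 l k); rewrite inE; first exact: measurable_escapes.
exact: (measurable_setD_cylinder dE trapE).
Qed.

Lemma measure_escapes k : (P (escapes v0 l k) <= ((1 - q) ^+ k)%:E)%E.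
Proof.
elim: k => [|k IHk]; first exact: probability_le1 (measurable_escapes v0 l 0).
apply: (le_trans (measure_escapes_succ k)).
by rewrite exprSr EFinM lee_wpmul2r // lee_fin subr_ge0.
Qed.

Lemma measure_not_cycles :
  P (~` [set lab : Lab | cycles lab v0 l]) = 0%E.
Proof.
have mC := measurableC (measurable_cycles v0 l).
rewrite -(fineK (fin_num_measure P _ mC)); congr EFin.
apply/eqP; rewrite eq_le fine_ge0 ?measure_ge0 // andbT.
apply: (@le0_of_le_expr _ _ (1 - q)).
  by rewrite ger0_norm ?subr_ge0 // ltrBlDr ltrDl.
move=> k; rewrite -lee_fin fineK ?fin_num_measure //.
apply: le_trans (measure_escapes k); apply: le_measure; rewrite ?inE //.
  exact: measurable_escapes.
by move=> lab /not_cycles_escapes.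
Qed.

End Escape.

Theorem theorem4p1 (R : realType) (P : probability Lab R)
    (HP : random_labeling_law P) (v0 : vertex) (l : 'I_4) :
  measurable [set lab : Lab | cycles lab v0 l] /\
  P [set lab : Lab | cycles lab v0 l] = 1%E.
Proof.
have mC := measurable_cycles v0 l; split=> //.
have := probability_setC P mC; rewrite measure_not_cycles //.
rewrite -(fineK (fin_num_measure P _ mC)) -EFinB => -[] PC1.
by congr EFin; lra.
Qed.
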